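(* Let $n\ge 2$ and let $\mu_1,\mu_2\in\Lambda$ satisfy $\alpha^\vee_i(\mu_1)=\alpha^\vee_i(\mu_2)$ for all $1\le i\le n-1$. Then the assignment $$E^{(r)}_i\mapsto E^{(r)}_i,\quad F^{(r)}_i\mapsto F^{(r)}_i,\quad D^{(s)}_i\mapsto D^{(s-\epsilon^\vee_i(\mu_1-\mu_2))}_i,\quad \widetilde D^{(s)}_i\mapsto \widetilde D^{(s+\epsilon^\vee_i(\mu_1-\mu_2))}_i$$ (for all admissible $i,r,s$) gives rise to a $\mathbb{C}$-algebra isomorphism $Y_{\mu_1}(\mathfrak{gl}_n)\xrightarrow{\sim} Y_{\mu_2}(\mathfrak{gl}_n)$.
   Context: Let $\Lambda=\bigoplus_{j=1}^n\mathbb{Z}\epsilon_j$ and let $\epsilon^\vee_1,\dots,\epsilon^\vee_n$ be the dual basis of the dual lattice ($\epsilon^\vee_i(\epsilon_j)=\delta_{ij}$); set $\alpha^\vee_i=\epsilon^\vee_i-\epsilon^\vee_{i+1}$ for $1\le i\le n-1$. For $\nu\in\Lambda$ put $d_j:=\epsilon^\vee_j(\nu)$. The shifted Drinfeld Yangian $Y_\nu(\mathfrak{gl}_n)$ is the associative $\mathbb{C}$-algebra generated by $E_i^{(r)},F_i^{(r)}$ ($1\le i<n$, $r\ge1$), $D_i^{(s)}$ ($1\le i\le n$, $s\ge d_i$), $\widetilde D_i^{(s)}$ ($1\le i\le n$, $s\ge -d_i$), with defining relations (all admissible indices): (Y0) $D_i^{(d_i)}=1$, $\sum_{t=d_i}^{r+d_i}D_i^{(t)}\widetilde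 D_i^{(r-t)}=-\delta_{r,0}$, $[D_i^{(r)},D_j^{(s)}]=0$; (Y1) $[E_i^{(r)},F_j^{(s)}]=-\delta_{i,j}\sum_{t=-d_i}^{r+s-1-d_{i+1}}\widetilde D_i^{(t)}D_{i+1}^{(r+s-t-1)}$; (Y2) $[D_i^{(r)},E_j^{(s)}]=(\delta_{i,j+1}-\delta_{i,j})\sum_{t=d_i}^{r-1}D_i^{(t)}E_j^{(r+s-t-1)}$; (Y3) $[D_i^{(r)},F_j^{(s)}]=(\delta_{i,j}-\delta_{i,j+1})\sum_{t=d_i}^{r-1}F_j^{(r+s-t-1)}D_i^{(t)}$; (Y4) $[E_i^{(r)},E_i^{(s)}]=\sum_{t=1}^{r-1}E_i^{(t)}E_i^{(r+s-t-1)}-\sum_{t=1}^{s-1}E_i^{(t)}E_i^{(r+s-t-1)}$; (Y5) $[F_i^{(r)},F_i^{(s)}]=\sum_{t=1}^{s-1}F_i^{(r+s-t-1)}F_i^{(t)}-\sum_{t=1}^{r-1}F_i^{(r+s-t-1)}F_i^{(t)}$; (Y6) $[E_i^{(r+1)},E_{i+1}^{(s)}]-[E_i^{(r)},E_{i+1}^{(s+1)}]=-E_i^{(r)}E_{i+1}^{(s)}$; (Y7) $[F_i^{(r+1)},F_{i+1}^{(s)}]-[F_i^{(r)},F_{i+1}^{(s+1)}]=F_{i+1}^{(s)}F_i^{(r)}$; (Y8),(Y9) $[E_i^{(r)},E_j^{(s)}]=0=[F_i^{(r)},F_j^{(s)}]$ if $|i-j|>1$; (Y10),(Y11) for $|i-j|=1$: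 $[E_i^{(r)},[E_i^{(s)},E_j^{(t)}]]+[E_i^{(s)},[E_i^{(r)},E_j^{(t)}]]=0$ and the same with all $E$ replaced by $F$. *)

From HB Require Import structures.
From mathcomp Require Import all_boot all_order all_algebra.
From mathcomp Require Import reals.
From mathcomp Require Import complex.
Set Implicit Arguments. Unset Strict Implicit. Unset Printing Implicit Defensive.
Import Order.TTheory GRing.Theory Num.Theory.
Local Open Scope ring_scope.

Notation Cplx R := (complex (R : realType)).

(* Weights: Lambda = Z^n, nu = sum_j nu_j eps_j, indexed 0..n-1 internally.
   eps_coord nu j = epsilon^vee_j(nu) for the 1-based index 1 <= j <= n
   (and 0 outside that range, never used). *)
Definition Lambda (n : nat) := {ffun 'I_n -> int}.

Definition eps_coord (n : nat) (nu : Lambda n) (j : nat) : int :=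
  odflt 0 (omap nu (insub j.-1 : option 'I_n)).

Definition alpha_coroot (n : nat) (nu : Lambda n) (i : nat) : int :=
  eps_coord nu i - eps_coord nu i.+1.

Definition isum (V : nmodType) (a b : int) (F : int -> V) : V :=
  if (a <= b)%R then \sum_(k < (absz (b - a)).+1) F (a + k%:Z) else 0.

Definition comm (A : pzRingType) (x y : A) : A := x * y - y * x.

Definition kd (A : pzRingType) (i j : nat) : A := (i == j)%:R.

Section Rels.
Variable (R : realType) (n : nat) (d : nat -> int) (A : algType (Cplx R)).
Variables (E F : nat -> int -> A) (D Dt : nat -> int -> A).
(* E i r = E_i^{(r)} (1 <= i < n, r >= 1); F likewise;
   D i s = D_i^{(s)} (1 <= i <= n, s >= d i);
   Dt i s = \widetilde D_i^{(s)} (1 <= i <= n, s >= - d i). *)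

Definition Eidx (i : nat) := (1 <= i < n)%N.
Definition Didx (i : nat) := (1 <= i <= n)%N.

Definition yangian_rels : Prop :=
  (forall i, Didx i -> D i (d i) = 1) /\
  (forall i, Didx i -> forall r : nat,
      isum (d i) (r%:Z + d i) (fun t => D i t * Dt i (r%:Z - t))
      = - (kd A r 0)) /\
  (forall i j (r s : int), Didx i -> Didx j -> d i <= r -> d j <= s ->
      comm (D i r) (D j s) = 0) /\
  (forall i j (r s : int), Eidx i -> Eidx j -> 1 <= r -> 1 <= s ->
      comm (E i r) (F j s) =
      - (kd A i j * isum (- d i) (r + s - 1 - d i.+1)
                          (fun t => Dt i t * D i.+1 (r + s - t - 1)))) /\
  (forall i j (r s : int), Didx i -> Eidx j -> d i <= r -> 1 <= s ->
      comm (D i r) (E j s) =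
      (kd A i j.+1 - kd A i j) *
        isum (d i) (r - 1) (fun t => D i t * E j (r + s - t - 1))) /\
  (forall i j (r s : int), Didx i -> Eidx j -> d i <= r -> 1 <= s ->
      comm (D i r) (F j s) =
      (kd A i j - kd A i j.+1) *
        isum (d i) (r - 1) (fun t => F j (r + s - t - 1) * D i t)) /\
  (forall i (r s : int), Eidx i -> 1 <= r -> 1 <= s ->
      comm (E i r) (E i s) =
      isum 1 (r - 1) (fun t => E i t * E i (r + s - t - 1))
      - isum 1 (s - 1) (fun t => E i t * E i (r + s - t - 1))) /\
  (forall i (r s : int), Eidx i -> 1 <= r -> 1 <= s ->
      comm (F i r) (F i s) =
      isum 1 (s - 1) (fun t => F i (r + s - t - 1) * F i t)
      - isum 1 (r - 1) (fun t => F i (r + s - t - 1) * F i t)) /\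
  (forall i (r s : int), Eidx i -> Eidx i.+1 -> 1 <= r -> 1 <= s ->
      comm (E i (r + 1)) (E i.+1 s) - comm (E i r) (E i.+1 (s + 1)) =
      - (E i r * E i.+1 s)) /\
  (forall i (r s : int), Eidx i -> Eidx i.+1 -> 1 <= r -> 1 <= s ->
      comm (F i (r + 1)) (F i.+1 s) - comm (F i r) (F i.+1 (s + 1)) =
      F i.+1 s * F i r) /\
  (forall i j (r s : int), Eidx i -> Eidx j -> (1 < absz (i%:Z - j%:Z))%N ->
      1 <= r -> 1 <= s ->
      comm (E i r) (E j s) = 0 /\ comm (F i r) (F j s) = 0) /\
  (forall i j (r s t : int), Eidx i -> Eidx j -> absz (i%:Z - j%:Z) = 1%N ->
      1 <= r -> 1 <= s -> 1 <= t ->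
      comm (E i r) (comm (E i s) (E j t)) + comm (E i s) (comm (E i r) (E j t)) = 0 /\
      comm (F i r) (comm (F i s) (F j t)) + comm (F i s) (comm (F i r) (F j t)) = 0).
End Rels.

Definition alg_hom (K : pzRingType) (A B : algType K) (f : A -> B) : Prop :=
  (forall (a : K) (x y : A), f (a *: x + y) = a *: f x + f y) /\
  f 1 = 1 /\ (forall x y : A, f (x * y) = f x * f y).

(* (A, E, F, D, Dt) is a presentation of the shifted Yangian Y_nu(gl_n):
   the generators satisfy the relations, and A is universal among C-algebras
   with such elements (i.e. A is the algebra with these generators and
   defining relations). *)
Definition is_shifted_yangian (R : realType) (n : nat) (nu : Lambda n)
    (A : algType (Cplx R)) (E F D Dt : nat -> int -> A) : Prop :=
  let d := eps_coord nu in
  yangian_rels n d E F D Dt /\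
  forall (B : algType (Cplx R)) (E' F' D' Dt' : nat -> int -> B),
    yangian_rels n d E' F' D' Dt' ->
    (exists f : A -> B, alg_hom f /\
       (forall i r, Eidx n i -> 1 <= r -> f (E i r) = E' i r /\ f (F i r) = F' i r) /\
       (forall i s, Didx n i -> d i <= s -> f (D i s) = D' i s) /\
       (forall i s, Didx n i -> - d i <= s -> f (Dt i s) = Dt' i s)) /\
    (forall f g : A -> B, alg_hom f -> alg_hom g ->
       (forall i r, Eidx n i -> 1 <= r -> f (E i r) = g (E i r) /\ f (F i r) = g (F i r)) ->
       (forall i s, Didx n i -> d i <= s -> f (D i s) = g (D i s)) ->
       (forall i s, Didx n i -> - d i <= s -> f (Dt i s) = g (Dt i s)) ->
       forall x, f x = g x).

From HB Require Import structures.
From mathcomp Require Import all_boot all_order all_algebra.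
From mathcomp Require Import reals complex.
From mathcomp Require Import zify ring.
Set Implicit Arguments.
Unset Strict Implicit.
Unset Printing Implicit Defensive.

Import Order.TTheory GRing.Theory Num.Theory.
Local Open Scope ring_scope.

(* Weights with the same values on all simple coroots differ by a multiple
   c of eps_1 + ... + eps_n, and re-indexing D_i, Dt_i by c turns the
   relations of Y_mu2 into those of Y_mu1. The universal properties then give
   homomorphisms both ways; their composites fix all generators, hence are
   the identity by uniqueness. *)

Lemma isum_shift (V : nmodType) (a b a' b' c : int) (F G : int -> V) :
  a' = a + c -> b' = b + c -> (forall t, G t = F (t - c)) ->
  isum a' b' G = isum a b F.
Proof.
move=> -> -> GE; rewrite /isum lerD2r.
have -> : b + c - (a + c) = b - a by ring.
case: ifP => // _; apply: eq_bigr => k _.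
by rewrite GE; congr F; ring.
Qed.

Section ShiftRelations.

Variables (R : realType) (n : nat) (d d' : nat -> int) (c : int).
Hypothesis d'E : forall i, Didx n i -> d' i = d i + c.
Variables (A : algType (Cplx R)) (E F D Dt : nat -> int -> A).

Lemma yangian_rels_shift :
  yangian_rels n d E F D Dt ->
  yangian_rels n d' E F (fun i s => D i (s - c)) (fun i s => Dt i (s + c)).
Proof.
move=> [D1 [DDt [DD [EF [DE [DF EErest]]]]]].
split; [|split; [|split; [|split; [|split; [|split]]]]] => //.
- by move=> i Hi /=; rewrite d'E // addrK D1.
- move=> i Hi r /=; rewrite -(DDt i Hi r); apply: (@isum_shift _ _ _ _ _ c).
  + exact: d'E.
  + by rewrite d'E // addrA.
  + by move=> t; congr (D i _ * Dt i _); ring.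
- move=> i j r s Hi Hj Hr Hs /=; apply: DD => //.
  + by move: Hr; rewrite d'E //; lia.
  + by move: Hs; rewrite d'E //; lia.
- move=> i j r s Hi Hj Hr Hs /=; rewrite EF //; congr (- (_ * _)).
  have Hi0 : Didx n i by move: Hi; rewrite /Eidx /Didx; lia.
  have Hi1 : Didx n i.+1 by move: Hi; rewrite /Eidx /Didx; lia.
  symmetry; apply: (@isum_shift _ _ _ _ _ (- c)).
  + by rewrite d'E //; ring.
  + by rewrite d'E //; ring.
  + by move=> t; congr (Dt i _ * D i.+1 _); ring.
- move=> i j r s Hi Hj Hr Hs /=; rewrite DE //; last by move: Hr; rewrite d'E //; lia.
  congr (_ * _); apply: (@isum_shift _ _ _ _ _ (- c)).
  + by rewrite d'E //; ring.
  + by ring.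
  + by move=> t; congr (D i _ * E j _); ring.
- move=> i j r s Hi Hj Hr Hs /=; rewrite DF //; last by move: Hr; rewrite d'E //; lia.
  congr (_ * _); apply: (@isum_shift _ _ _ _ _ (- c)).
  + by rewrite d'E //; ring.
  + by ring.
  + by move=> t; congr (F j _ * D i _); ring.
Qed.

End ShiftRelations.

Lemma eps_coord_sub_const (n : nat) (mu1 mu2 : Lambda n) :
  (forall i : nat, (1 <= i <= n.-1)%N -> alpha_coroot mu1 i = alpha_coroot mu2 i) ->
  forall i, Didx n i ->
  eps_coord mu1 i = eps_coord mu2 i + (eps_coord mu1 1 - eps_coord mu2 1).
Proof.
move=> alphaE [|k] /andP[] // _; elim: k => [|k IH] Hk; first by ring.
have Hk1 : (1 <= k.+1 <= n.-1)%N by move: Hk; case: (n) => //.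
have := alphaE _ Hk1; have := IH (ltnW Hk); rewrite /alpha_coroot; lia.
Qed.

Lemma alg_hom_comp (K : pzRingType) (A B C : algType K) (f : A -> B) (g : B -> C) :
  alg_hom f -> alg_hom g -> alg_hom (g \o f).
Proof.
move=> [fD [f1 fM]] [gD [g1 gM]]; split; [|split] => /=.
- by move=> a x y; rewrite fD gD.
- by rewrite f1 g1.
- by move=> x y; rewrite fM gM.
Qed.

Lemma alg_hom_id (K : pzRingType) (A : algType K) : alg_hom (@id A).
Proof. by []. Qed.

Section ShiftHom.

Variables (R : realType) (n : nat).

Definition shift_hom (mu1 mu2 : Lambda n)
    (A1 : algType (Cplx R)) (E1 F1 D1 Dt1 : nat -> int -> A1)
    (A2 : algType (Cplx R)) (E2 F2 D2 Dt2 : nat -> int -> A2) (f : A1 -> A2) :=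
  alg_hom f /\
  (forall i (r : int), Eidx n i -> 1 <= r ->
     f (E1 i r) = E2 i r /\ f (F1 i r) = F2 i r) /\
  (forall i (s : int), Didx n i -> eps_coord mu1 i <= s ->
     f (D1 i s) = D2 i (s - (eps_coord mu1 i - eps_coord mu2 i))) /\
  (forall i (s : int), Didx n i -> - eps_coord mu1 i <= s ->
     f (Dt1 i s) = Dt2 i (s + (eps_coord mu1 i - eps_coord mu2 i))).

Variables (mu1 mu2 : Lambda n).
Variables (A1 : algType (Cplx R)) (E1 F1 D1 Dt1 : nat -> int -> A1).
Variables (A2 : algType (Cplx R)) (E2 F2 D2 Dt2 : nat -> int -> A2).

Lemma shift_hom_exists :
  (forall i : nat, (1 <= i <= n.-1)%N -> alpha_coroot mu1 i = alpha_coroot mu2 i) ->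
  is_shifted_yangian mu1 E1 F1 D1 Dt1 ->
  yangian_rels n (eps_coord mu2) E2 F2 D2 Dt2 ->
  exists f, shift_hom mu1 mu2 E1 F1 D1 Dt1 E2 F2 D2 Dt2 f.
Proof.
move=> alphaE [_ univ1] rels2.
have epsE := eps_coord_sub_const alphaE.
set c := eps_coord mu1 1 - eps_coord mu2 1.
have cE i : Didx n i -> eps_coord mu1 i - eps_coord mu2 i = c.
  by move=> Hi; rewrite (epsE i Hi) addrAC subrr add0r.
have [[f [fhom [fEF [fD fDt]]]] _] :=
  univ1 A2 _ _ _ _ (yangian_rels_shift epsE rels2).
exists f; split; [|split; [|split]] => //.
- by move=> i s Hi Hs; rewrite cE // fD.
- by move=> i s Hi Hs; rewrite cE // fDt.
Qed.

Lemma shift_hom_cancel (f : A1 -> A2) (g : A2 -> A1) :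
  is_shifted_yangian mu1 E1 F1 D1 Dt1 ->
  shift_hom mu1 mu2 E1 F1 D1 Dt1 E2 F2 D2 Dt2 f ->
  shift_hom mu2 mu1 E2 F2 D2 Dt2 E1 F1 D1 Dt1 g ->
  cancel f g.
Proof.
move=> [rels1 univ1] [fhom [fEF [fD fDt]]] [ghom [gEF [gD gDt]]] x.
have [_ uniq1] := univ1 A1 E1 F1 D1 Dt1 rels1.
apply: (uniq1 (g \o f) id (alg_hom_comp fhom ghom) (alg_hom_id _)) => /=.
- by move=> i r Hi Hr; have [-> ->] := fEF i r Hi Hr; exact: gEF.
- move=> i s Hi Hs; rewrite fD // gD //; last by lia.
  by congr (D1 i _); ring.
- move=> i s Hi Hs; rewrite fDt // gDt //; last by lia.
  by congr (Dt1 i _); ring.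
Qed.

End ShiftHom.

Theorem lemma2p2 (R : realType) (n : nat) (mu1 mu2 : Lambda n) :
  (2 <= n)%N ->
  (forall i : nat, (1 <= i <= n.-1)%N -> alpha_coroot mu1 i = alpha_coroot mu2 i) ->
  forall (A1 : algType (Cplx R)) (E1 F1 D1 Dt1 : nat -> int -> A1)
         (A2 : algType (Cplx R)) (E2 F2 D2 Dt2 : nat -> int -> A2),
  is_shifted_yangian mu1 E1 F1 D1 Dt1 ->
  is_shifted_yangian mu2 E2 F2 D2 Dt2 ->
  exists f : A1 -> A2,
    alg_hom f /\ bijective f /\
    (forall i (r : int), Eidx n i -> 1 <= r ->
       f (E1 i r) = E2 i r /\ f (F1 i r) = F2 i r) /\
    (forall i (s : int), Didx n i -> eps_coord mu1 i <= s ->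
       f (D1 i s) = D2 i (s - (eps_coord mu1 i - eps_coord mu2 i))) /\
    (forall i (s : int), Didx n i -> - eps_coord mu1 i <= s ->
       f (Dt1 i s) = Dt2 i (s + (eps_coord mu1 i - eps_coord mu2 i))).
Proof.
move=> _ alphaE A1 E1 F1 D1 Dt1 A2 E2 F2 D2 Dt2 Y1 Y2.
have alphaE' i (Hi : (1 <= i <= n.-1)%N) : alpha_coroot mu2 i = alpha_coroot mu1 i.
  by rewrite alphaE.
have [f fshift] := shift_hom_exists alphaE Y1 Y2.1.
have [g gshift] := shift_hom_exists alphaE' Y2 Y1.1.
have [fhom fgens] := fshift.
exists f; split; [|split] => //.
exists g.
- exact: shift_hom_cancel Y1 fshift gshift.
- exact: shift_hom_cancel Y2 gshift fshift.
Qed.
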